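(* For every $v\in\,]-\infty,-\mu_\kappa[\,\cap\mathbb Z_{d,\ell}$ one has $\epsilon(v)=-\mu_\kappa-v>0$, and $\epsilon(-\mu_\kappa)=\min(\mathcal V_1\setminus\{-\mu_\kappa\})+\mu_\kappa$ (with $\min\emptyset=+\infty$).
   Context: Let $\mathbf K$ be a field and $\ell\geq 2$ an integer. Let $L=a_n\phi_\ell^n+\dots+a_0$ with $n\geq1$, $a_i\in\mathbf K[z]$, $a_0a_n\neq0$, where $\phi_\ell(f)(z)=f(z^\ell)$ acting on Hahn series with coefficients in $\mathbf K$ and value group $\mathbb Q$. Let $\mathcal P(L)=\{(\ell^i,j): 0\le i\le n,\ j\in\operatorname{supp} a_i\}$. The Newton polygon of $L$ is the convex hull of $\{(\ell^i,j): 0\le i\le n,\ j\geq\operatorname{val} a_i\}\subset\mathbb R^2$; its non-vertical edges have slopes $\mu_1<\dots<\mu_\kappa$, $\mathcal S(L)=\{\mu_1,\dots,\mu_\kappa\}$. Let $d\geq1$ be a common multiple of the denominators of the $\mu_k$ and $\mathbb Z_{d,\ell}=\bigcup_{i\geq0}\frac{1}{d\ell^i}\mathbb Z$. Define $\Psi(v)=\{v\ell^i+j:(\ell^i,j)\in\mathcal P(L)\}$, $\pi(q)=\max\{(q-j)/\ell^i:(\ell^i,j)\in\mathcal P(L)\}$. Let $\mathcal V_0=-\mathcal S(L)$, $\mathcal V_{i+1}=\bigcup_{v\in\mathcal V_i}\pi(\Psi(v))$, $\mathcal V=\bigcup_{i\ge0}\mathcal V_i$ (a well-ordered set). For $v\in\mathbb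 Q$ let $\epsilon(v)=\min\{w\in\mathcal V: w>v\}-v\in\mathbb Q_{>0}\cup\{+\infty\}$ ($+\infty$ if this set is empty). *)

From HB Require Import structures.
From mathcomp Require Import all_boot all_order all_algebra.
Set Implicit Arguments. Unset Strict Implicit. Unset Printing Implicit Defensive.
Import Order.TTheory GRing.Theory Num.Theory.
Local Open Scope ring_scope.

(* The operator L = a_n phi^n + ... + a_0 is given by its coefficients
   a : nat -> {poly K}, only a i for i <= n being relevant. *)

Definition pval (K : fieldType) (p : {poly K}) : nat := find (fun c => c != 0) p.

Section NewtonData.
Variables (K : fieldType) (l n : nat) (a : nat -> {poly K}).

(* (i,j) codes the point (l^i, j) of P(L): 0 <= i <= n, j in supp a_i *)
Definition inP (i j : nat) : Prop := (i <= n)%N /\ (a i)`_j != 0.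

(* mu is the slope of a non-vertical edge of the Newton polygon, i.e. of a
   lower supporting line of the convex hull of
   {(l^i, j) : 0 <= i <= n, j >= val a_i} meeting it in two distinct points
   (necessarily of the form (l^i, val a_i), (l^k, val a_k), i < k). *)
Definition is_slope (mu : rat) : Prop :=
  exists i k : nat, [/\ (i < k <= n)%N, a i != 0, a k != 0,
    mu = ((pval (a k))%:R - (pval (a i))%:R) / ((l ^ k)%:R - (l ^ i)%:R)
  & forall m : nat, (m <= n)%N -> a m != 0 ->
      (pval (a i))%:R + mu * ((l ^ m)%:R - (l ^ i)%:R) <= (pval (a m))%:R].

Definition is_pi (q w : rat) : Prop :=
  (exists i j, inP i j /\ w = (q - j%:R) / (l ^ i)%:R) /\
  (forall i j, inP i j -> (q - j%:R) / (l ^ i)%:R <= w).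

Fixpoint Vk (k : nat) (w : rat) : Prop :=
  match k with
  | 0 => exists mu, is_slope mu /\ w = - mu
  | k'.+1 => exists v, Vk k' v /\
      exists i j, inP i j /\ is_pi (v * (l ^ i)%:R + j%:R) w
  end.

Definition V (w : rat) : Prop := exists k, Vk k w.

(* e = epsilon(v), None standing for +oo *)
Definition is_eps (v : rat) (e : option rat) : Prop :=
  match e with
  | Some x => [/\ V (v + x), v < v + x & forall w, V w -> v < w -> v + x <= w]
  | None => forall w, V w -> ~ (v < w)
  end.

End NewtonData.

(* m = min of the set P, None standing for min of the empty set = +oo *)
Definition is_min_opt (P : rat -> Prop) (m : option rat) : Prop :=
  match m with
  | Some x => P x /\ forall y, P y -> x <= y
  | None => forall y, ~ P y
  end.

Definition in_Zdl (d l : nat) (v : rat) : Prop :=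
  exists i : nat, ((d * l ^ i)%:R * v) \is a Num.int.

(* Every element of V is at least -mu_k: V_0 consists of the -mu with
   mu <= mu_k, and pi(Psi(v)) >= v since the point (l^i, j) producing
   v l^i + j contributes v itself to the maximum.  So epsilon(v) = -mu_k - v
   below -mu_k.  Above -mu_k, every element w of V dominates an element of
   V_1 \ {-mu_k}: walking back along the nondecreasing chain that produced w,
   either some predecessor equals -mu_k (so its successor lies in V_1), or
   the chain starts at some -mu > -mu_k, and -mu is in V_1 because the edge
   of slope mu is a supporting line, whence pi(Psi(-mu)) = -mu.  Finally
   V_1 + mu_k lies in (1/(d l^n)) N, so V_1 \ {-mu_k} has a least element
   as soon as it is nonempty. *)

From HB Require Import structures.
From mathcomp Require Import all_boot all_order all_algebra.
From mathcomp Require Import boolp.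
From mathcomp Require Import ring lra.
Import Order.TTheory GRing.Theory Num.Theory.
Local Open Scope ring_scope.

Lemma ex_min_discrete (R : numDomainType) (S : R -> Prop) (c D : R) : 0 < D ->
  (forall w, S w -> exists k : nat, D * (w - c) = k%:R) ->
  (exists w, S w) -> exists2 w, S w & forall y, S y -> w <= y.
Proof.
move=> D_gt0 S_discrete [w0 Sw0].
pose P k := `[< exists2 w, S w & D * (w - c) = k%:R >].
have exP : exists k, P k.
  by have [k hk] := S_discrete w0 Sw0; exists k; apply/asboolP; exists w0.
case: (ex_minnP exP) => k /asboolP[w Sw wk] k_min.
exists w => // y Sy; have [m ym] := S_discrete y Sy.
have /k_min : P m by apply/asboolP; exists y.
by rewrite -(ler_nat R) -wk -ym ler_pM2l // lerD2r.
Qed.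

Lemma coef_pval_neq0 (K : fieldType) (p : {poly K}) : p != 0 -> p`_(pval p) != 0.
Proof.
move=> p_neq0; apply: (@nth_find _ 0 (fun c => c != 0)); apply/hasP.
exists (lead_coef p); last by rewrite lead_coef_eq0.
by rewrite /lead_coef mem_nth // prednK // size_poly_gt0.
Qed.

Lemma pval_leq (K : fieldType) (p : {poly K}) j : p`_j != 0 -> (pval p <= j)%N.
Proof.
by move=> pj_neq0; rewrite leqNgt; apply: contraTN pj_neq0 => /(before_find 0) ->.
Qed.

Section NewtonPolygon.
Local Set Implicit Arguments.
Local Unset Strict Implicit.
Variables (K : fieldType) (l n : nat) (a : nat -> {poly K}).
Hypothesis l_ge2 : (2 <= l)%N.

Lemma natr_expl_gt0 i : 0 < (l ^ i)%:R :> rat.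
Proof. by rewrite ltr0n expn_gt0 (leq_trans _ l_ge2). Qed.

Lemma is_pi_Psi_ge v i j w :
  inP n a i j -> is_pi l n a (v * (l ^ i)%:R + j%:R) w -> v <= w.
Proof.
move=> Pij [_ /(_ i j Pij)].
by rewrite addrK mulfK // gt_eqF // natr_expl_gt0.
Qed.

Lemma is_pi_slope mu : is_slope l n a mu ->
  exists i, inP n a i (pval (a i)) /\
            is_pi l n a (- mu * (l ^ i)%:R + (pval (a i))%:R) (- mu).
Proof.
move=> [i [k [/andP[lt_ik le_kn] ai_neq0 _ _ below]]].
have Pi : inP n a i (pval (a i)).
  by split; [exact: leq_trans (ltnW lt_ik) le_kn | exact: coef_pval_neq0].
exists i; split => //; split.
  by exists i, (pval (a i)); rewrite addrK mulfK // gt_eqF // natr_expl_gt0.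
move=> m j [le_mn amj_neq0].
have am_neq0 : a m != 0 by apply: contraNneq amj_neq0 => ->; rewrite coef0.
have := below m le_mn am_neq0.
have : (pval (a m))%:R <= j%:R :> rat by rewrite ler_nat pval_leq.
rewrite ler_pdivrMr ?natr_expl_gt0 //.
have := natr_expl_gt0 m; have := natr_expl_gt0 i; lra.
Qed.

Lemma Vk1_opp_slope mu : is_slope l n a mu -> Vk l n a 1 (- mu).
Proof.
move=> mu_slope; have [i [Pi pi_mu]] := is_pi_slope mu_slope.
by exists (- mu); split; [exists mu | exists i, (pval (a i))].
Qed.

Lemma is_eps_Some v w :
  V l n a w -> v < w -> (forall y, V l n a y -> v < y -> w <= y) ->
  is_eps l n a v (Some (w - v)).
Proof. by rewrite /= addrC subrK. Qed.

Variable muk : rat.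
Hypothesis muk_slope : is_slope l n a muk.
Hypothesis muk_max : forall mu, is_slope l n a mu -> mu <= muk.

Lemma Vk_ge k w : Vk l n a k w -> - muk <= w.
Proof.
elim: k w => [|k IHk] w /=.
  by move=> [mu [/muk_max]]; rewrite -lerN2 => + ->.
move=> [v [/IHk muk_v [i [j [Pij pi_w]]]]].
exact: le_trans muk_v (is_pi_Psi_ge Pij pi_w).
Qed.

Lemma exists_V1_le_Vk k w : Vk l n a k w -> - muk < w ->
  exists2 w', Vk l n a 1 w' /\ w' <> - muk & w' <= w.
Proof.
elim: k w => [|k IHk] w.
  move=> [mu [mu_slope ->]] muk_lt; exists (- mu) => //.
  by split; [exact: Vk1_opp_slope | by move=> e; rewrite e ltxx in muk_lt].
move=> [v [Vv [i [j [Pij pi_w]]]]] muk_lt.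
have v_le_w := is_pi_Psi_ge Pij pi_w.
have [muk_v | muk_lt_v] := eqVneq v (- muk).
- exists w => //; split; last by move=> e; rewrite e ltxx in muk_lt.
  by exists v; split; [rewrite muk_v; exists muk | exists i, j].
- have [|w' V1w' le_w'v] := IHk v Vv.
    by rewrite lt_neqAle eq_sym muk_lt_v (Vk_ge Vv).
  by exists w' => //; exact: le_trans le_w'v v_le_w.
Qed.

Variable d : nat.
Hypothesis slope_int : forall mu, is_slope l n a mu -> (d%:R * mu) \is a Num.int.

Lemma Vk1_scaled_int w : Vk l n a 1 w -> ((d * l ^ n)%:R * w) \is a Num.int.
Proof.
move=> [_ [[mu [mu_slope ->]] [i [j [_ [[i' [j' [[le_i'n _] ->]] _]]]]]]].
have l_i'_neq0 : (l ^ i')%:R != 0 :> rat by rewrite gt_eqF // natr_expl_gt0.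
have -> : (d * l ^ n)%:R * ((- mu * (l ^ i)%:R + j%:R - j'%:R) / (l ^ i')%:R) =
    (l ^ (n - i'))%:R * (- (d%:R * mu) * (l ^ i)%:R + (d * j)%:R - (d * j')%:R).
  by rewrite -{1}(subnK le_i'n) expnD !natrM; field.
have dmu_int := slope_int mu_slope.
by rewrite rpredM ?rpredB ?rpredD ?rpredM ?rpredN ?rpred_nat.
Qed.

Lemma Vk1_discrete w : Vk l n a 1 w ->
  exists k : nat, (d * l ^ n)%:R * (w - - muk) = k%:R.
Proof.
move=> V1w; have V1_muk := Vk1_opp_slope muk_slope.
apply/natrP; rewrite natrEint mulr_ge0 ?subr_ge0 ?(Vk_ge V1w) // andbT.
by rewrite mulrBr rpredB ?Vk1_scaled_int.
Qed.

End NewtonPolygon.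

Theorem mainTheorem12 (K : fieldType) (l n : nat) (a : nat -> {poly K})
  (muk : rat) (d : nat) :
  (2 <= l)%N -> (1 <= n)%N -> a 0%N != 0 -> a n != 0 ->
  is_slope l n a muk -> (forall mu, is_slope l n a mu -> mu <= muk) ->
  (0 < d)%N -> (forall mu, is_slope l n a mu -> (d%:R * mu) \is a Num.int) ->
  (forall v : rat, v < - muk -> in_Zdl d l v ->
     0 < - muk - v /\ is_eps l n a v (Some (- muk - v))) /\
  (exists m : option rat,
     is_min_opt (fun w => Vk l n a 1 w /\ w <> - muk) m /\
     is_eps l n a (- muk) (omap (fun x => x + muk) m)).
Proof.
move=> l_ge2 _ _ _ muk_slope muk_max d_gt0 slope_int.
have V_muk : V l n a (- muk) by exists 0%N, muk.
have V_ge w : V l n a w -> - muk <= w by move=> [k /(Vk_ge l_ge2 muk_max)].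
split=> [v v_lt _ | ].
  split; first by rewrite subr_gt0.
  by apply: is_eps_Some => // w /V_ge.
pose S w := Vk l n a 1 w /\ w <> - muk.
have [[w0 Sw0] | S0] := pselect (exists w, S w); last first.
  exists None; split=> [w Sw | w [k Vkw] muk_lt]; first by apply: S0; exists w.
  have [w' Sw' _] := exists_V1_le_Vk l_ge2 muk_slope muk_max Vkw muk_lt.
  by apply: S0; exists w'.
have D_gt0 : 0 < (d * l ^ n)%:R :> rat.
  by rewrite ltr0n muln_gt0 d_gt0 expn_gt0 (leq_trans _ l_ge2).
have [w Sw w_min] : exists2 w, S w & forall y, S y -> w <= y.
  apply: (@ex_min_discrete _ S (- muk) _ D_gt0); last by exists w0.
  by move=> y [/(Vk1_discrete l_ge2 muk_slope muk_max slope_int)].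
exists (Some w); split=> //=; rewrite -[muk in w + muk]opprK.
apply: is_eps_Some; first by exists 1%N; case: Sw.
  by rewrite lt_neqAle eq_sym; case: Sw => /(Vk_ge l_ge2 muk_max) -> /eqP ->.
move=> y [k Vky] muk_lt.
have [w' Sw' le_w'y] := exists_V1_le_Vk l_ge2 muk_slope muk_max Vky muk_lt.
exact: le_trans (w_min _ Sw') le_w'y.
Qed.
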